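(* Let $(a,b)$ be a coprime pair of positive integers. Then: (1) If $A(a,b)=(m,n)$, then $W(a,b)=w(m,n)$, i.e. $W(a,b)=w(A(a,b))$. (2) $A$ is involutive: if $A(a,b)=(m,n)$ then $A(m,n)=(a,b)$. (3) $A$ is symmetric: if $A(a,b)=(m,n)$ then $A(b,a)=(n,m)$. (4) $A(a,1)=(a,1)$, and if $a$ is odd, $A(a,2)=\left(\frac{a+1}{2},\frac{a+3}{2}\right)$.
   Context: For a coprime pair $(a,b)$ of positive integers, set $(a_0,b_0)=(a,b)$, $(m_0,n_0)=(1,1)$, and inductively: if $a_i>b_i$, let $w_{i+1}=L$, $(a_{i+1},b_{i+1})=(a_i-b_i,b_i)$, $(m_{i+1},n_{i+1})=(m_i+n_i,n_i)$; if $a_i<b_i$, let $w_{i+1}=R$, $(a_{i+1},b_{i+1})=(a_i,b_i-a_i)$, $(m_{i+1},n_{i+1})=(m_i,n_i+m_i)$. The process stops at the first $N$ with $(a_N,b_N)=(1,1)$. Define the word $w(a,b)=w_1w_2\cdots w_N$ in the letters $L,R$, the pair $A(a,b)=(m_N,n_N)$, and the reversed word $W(a,b)=W_1\cdots W_N$ with $W_i=w_{N+1-i}$. *)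

From mathcomp Require Import all_boot.
Set Implicit Arguments. Unset Strict Implicit. Unset Printing Implicit Defensive.

Inductive letter := L | R.

(* For a coprime pair of positive integers,
   fuel a+b is more than enough (each step decreases a_i+b_i by >= 1). *)
Fixpoint walk (fuel a b m n : nat) : seq letter * (nat * nat) :=
  match fuel with
  | 0 => ([::], (m, n))
  | f.+1 =>
    if (a == 1) && (b == 1) then ([::], (m, n))
    else if b < a then
      let r := walk f (a - b) b (m + n) n in (L :: r.1, r.2)
    else if a < b then
      let r := walk f a (b - a) m (n + m) in (R :: r.1, r.2)
    else ([::], (m, n)) (* a = b <> 1: impossible for coprime pairs *)
  end.

Definition w (a b : nat) : seq letter := (walk (a + b) a b 1 1).1.
Definition A (a b : nat) : nat * nat := (walk (a + b) a b 1 1).2.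
Definition W (a b : nat) : seq letter := rev (w a b).

(** Read a word u in L, R from the right as a path from (1,1) that adds the
    second coordinate to the first (L) or the first to the second (R); call
    its endpoint [word_pair u].  Every coprime pair is [word_pair u] for
    some u, the walk started at [word_pair u] spells out u, and its
    accumulator (m,n) evaluates u in the opposite order, i.e. ends at
    [word_pair (rev u)].  So w (word_pair u) = u and
    A (word_pair u) = word_pair (rev u): all four claims follow by reversing
    words, exchanging the letters L and R, and evaluating L^k and L^k R. *)

From mathcomp Require Import all_boot.
From mathcomp Require Import zify.

Set Implicit Arguments.
Unset Strict Implicit.
Unset Printing Implicit Defensive.

Definition step (c : letter) (p : nat * nat) : nat * nat :=
  match c with L => (p.1 + p.2, p.2) | R => (p.1, p.1 + p.2) end.

Definition word_pair (u : seq letter) : nat * nat := foldr step (1, 1) u.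

Definition flip_letter (c : letter) : letter := match c with L => R | R => L end.

Lemma word_pair_bounds u :
  [/\ 0 < (word_pair u).1, 0 < (word_pair u).2
    & size u + 2 <= (word_pair u).1 + (word_pair u).2].
Proof. by elim: u => [|[] u /= [? ? ?]] //=; split; lia. Qed.

Lemma walk_word_pair u f m n : size u < f ->
  walk f (word_pair u).1 (word_pair u).2 m n =
  (u, foldl (fun p c => step c p) (m, n) u).
Proof.
elim: u f m n => [|c u IH] [|f] m n //= hf.
have [u1_gt0 u2_gt0 _] := word_pair_bounds u.
rewrite -/(word_pair u); case: c => /=.
- rewrite ifF; last by apply/andP; case=> /eqP; lia.
  by rewrite ifT ?addnK ?IH //; lia.
- rewrite ifF; last by apply/andP; case=> _ /eqP; lia.
  by rewrite ifF ?ifT ?addKn ?IH 1?addnC //; lia.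
Qed.

Section WalkOfWordPair.
Variables (u : seq letter) (a b : nat).
Hypothesis (word_pair_u : word_pair u = (a, b)).

Let walk_u : walk (a + b) a b 1 1 = (u, word_pair (rev u)).
Proof.
have [_ _ size_u] := word_pair_bounds u.
rewrite -[a]/((a, b).1) -[b]/((a, b).2) -word_pair_u walk_word_pair; last lia.
by rewrite -[u in foldl _ _ u]revK foldl_rev.
Qed.

Lemma w_word_pair : w a b = u.
Proof. by rewrite /w walk_u. Qed.

Lemma A_word_pair : A a b = word_pair (rev u).
Proof. by rewrite /A walk_u. Qed.

End WalkOfWordPair.

Lemma coprime_subr a b : a <= b -> coprime a (b - a) = coprime a b.
Proof. by move=> le_ab; rewrite /coprime -gcdnDl subnKC. Qed.

Lemma coprime_word_pair a b : 0 < a -> 0 < b -> coprime a b ->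
  exists u, word_pair u = (a, b).
Proof.
elim: {a b}(a + b) {-2}a {-2}b (leqnn (a + b)) => [|k IH] a b ab_le a_gt0 b_gt0.
  lia.
case: (ltngtP a b) => [lt_ab | lt_ba | <-] co_ab.
- have co_a_ba : coprime a (b - a) by rewrite coprime_subr 1?ltnW.
  have [||u ab_u] := IH a (b - a) _ a_gt0 _ co_a_ba; try lia.
  by exists (R :: u); rewrite /word_pair /= -/(word_pair u) ab_u /=; congr pair; lia.
- have co_ab_b : coprime (a - b) b.
    by rewrite coprime_sym coprime_subr 1?coprime_sym 1?ltnW.
  have [||u ab_u] := IH (a - b) b _ _ b_gt0 co_ab_b; try lia.
  by exists (L :: u); rewrite /word_pair /= -/(word_pair u) ab_u /=; congr pair; lia.
- by move: co_ab; rewrite /coprime gcdnn => /eqP->; exists [::].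
Qed.

Lemma foldr_step_flip z u :
  foldr step (z.2, z.1) (map flip_letter u) =
  ((foldr step z u).2, (foldr step z u).1).
Proof. by elim: u => [|[] u /= ->] //=; congr pair; lia. Qed.

Lemma word_pair_flip u :
  word_pair (map flip_letter u) = ((word_pair u).2, (word_pair u).1).
Proof. exact: foldr_step_flip (1, 1) u. Qed.

Lemma foldr_step_nseqL z k : foldr step z (nseq k L) = (z.1 + k * z.2, z.2).
Proof. by case: z => x y; elim: k => [|k /= ->] /=; congr pair; lia. Qed.

Theorem lemma2p1 (a b : nat) (ha : 0 < a) (hb : 0 < b) (hab : coprime a b) :
  (forall m n, A a b = (m, n) -> W a b = w m n) /\
  (forall m n, A a b = (m, n) -> A m n = (a, b)) /\
  (forall m n, A a b = (m, n) -> A b a = (n, m)) /\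
  (A a 1 = (a, 1) /\ (odd a -> A a 2 = ((a + 1) %/ 2, (a + 3) %/ 2))).
Proof.
have [u ab_u] := coprime_word_pair ha hb hab.
rewrite (A_word_pair ab_u).
split; [|split; [|split; [|split]]] => [m n mn_u|m n mn_u|m n mn_u||].
- by rewrite /W (w_word_pair ab_u) (w_word_pair mn_u).
- by rewrite (A_word_pair mn_u) revK.
- have ba_flip : word_pair (map flip_letter u) = (b, a).
    by rewrite word_pair_flip ab_u.
  by rewrite (A_word_pair ba_flip) -map_rev word_pair_flip mn_u.
- have a1_Lk : word_pair (nseq a.-1 L) = (a, 1).
    by rewrite /word_pair foldr_step_nseqL /=; congr pair; lia.
  by rewrite (A_word_pair a1_Lk) rev_nseq.
- move=> odd_a; set k := a./2.
  have a_eq : a = k.*2.+1 by rewrite -[a in LHS]odd_double_half odd_a.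
  have a2_LkR : word_pair (rcons (nseq k L) R) = (a, 2).
    by rewrite /word_pair -cats1 foldr_cat /= foldr_step_nseqL /=; congr pair; lia.
  rewrite (A_word_pair a2_LkR) rev_rcons rev_nseq /word_pair /=.
  by rewrite foldr_step_nseqL /= a_eq; congr pair; lia.
Qed.
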